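(* Let $k>m$ and $2\le r\le \delta_k+1$. (1) If $\delta_k\le m-2$, then for $i=1,2,3$ (with $k$ odd for $i=2,3$), every graph $G_i(n,k)$ satisfies $N_r(G_i(n,k)) \leq N_r(H_n(m,k))$; equality holds if and only if $r=2$ and $G_i(n,k)\cong H_n(m,k)$ (for $i=1,3$), or $k=5$, $m=3$ and $G_2(n,k)\cong S_{a,n-a}$ for some $a$ (for $i=2$). (2) For $k=7$ and $i=4,5$: $N_r( G_i(n) ) < N_r(K_2\vee I_{n-2})$. (3) For $k=9$ and $n>4$: $N_r(I_2 \vee \frac{n-2}{2} K_2 ) < N_r(K_3 \vee I_{n-3})$ and $N_r(K_2 \vee \frac{n-2}{2} K_2 ) < N_r(K_3 \vee I_{n-3})$.
   Context: All graphs are finite and simple. $K_n$, $I_n$ denote the complete and the edgeless graph on $n$ vertices; $K_{1,s}$ is the star with $s$ leaves. For disjoint graphs $G,H$: $G\cup H$ is their disjoint union, $tG$ is the disjoint union of $t$ copies of $G$, and $G\vee H$ is obtained from $G\cup H$ by adding all edges between $V(G)$ and $V(H)$. $N_r(G)$ is the number of copies of $K_r$ in $G$. A block is a maximal connected subgraph without a cut vertex. $T(n,s)$ is the balanced complete $s$-partite graph on $n$ vertices; if $s\ge n$, $T(n,s)=K_n$. Let $\delta_k=\lfloor k/2\rfloor-1$. $H_n(m,k)=T(\delta_k,m-2)\vee I_{n-\delta_k}$ if $m\le \delta_k+2$; $H_n(m,k)=K_{\delta_k}\vee I_{n-\delta_k}$ if $\delta_k+2<m<k$ and $k$ is even; $H_n(m,k)=K_{\delta_k}\vee(I_{n-\delta_k-2}\cup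 K_2)$ if $\delta_k+2<m<k$ and $k$ is odd. $S_{a,n-a}$ is the double star on $n$ vertices obtained from stars on $a$ and on $n-a$ vertices by joining their centres. For $\delta_k\le m-2$: $G_1(n,k)=K_1\vee tK_{\delta_k}$ where $n=1+t\delta_k$, $t\ge1$ (the vertex of $K_1$ is its centre); for $k$ odd, $G_2(n,k)$ is obtained from disjoint $G_1(n_1,k)$, $G_1(n_2,k)$ by joining their centres, $n=n_1+n_2$; for $k$ odd, a graph $G_3(n,k)$ is any $n$-vertex graph obtained from $G_1(n-1,k)$ by replacing one block $K_{\delta_k+1}$ by a $K_m$-free block $B$ of order $\delta_k+2$ (sharing the centre as its cut vertex) such that the result has minimum degree at least $\delta_k$. $G_4(n)$ (resp. $G_5(n)$) is the $n$-vertex graph obtained from disjoint $G_1(n_1,7)$ and $K_{1,n_2-2}$ by joining the centre of $G_1(n_1,7)$ to all leaves (resp. all vertices) of $K_{1,n_2-2}$, where $n_2\ge4$, $n=n_1+n_2-1$. *)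

From HB Require Import structures.
From mathcomp Require Import all_boot.
Set Implicit Arguments. Unset Strict Implicit. Unset Printing Implicit Defensive.

(* All graphs built below are simple (symmetric, irreflexive) by construction;
   for arbitrary graphs we require [simple] explicitly. *)
Record graph := Graph { gV : finType; gadj : rel gV }.
Arguments gadj : clear implicits.

Definition simple (G : graph) : Prop :=
  symmetric (gadj G) /\ irreflexive (gadj G).

Definition clique (G : graph) (S : {set gV G}) : bool :=
  [forall x in S, forall y in S, (x != y) ==> gadj G x y].

Definition Nr (r : nat) (G : graph) : nat :=
  #|[set S : {set gV G} | (#|S| == r) && clique S]|.

Definition isomorphic (G H : graph) : Prop :=
  exists f : gV G -> gV H, bijective f /\ forall x y, gadj H (f x) (f y) = gadj G x y.

Definition degree (G : graph) (v : gV G) : nat := #|[set u | gadj G v u]|.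

Definition min_degree_ge (G : graph) (d : nat) : Prop :=
  forall v : gV G, d <= degree v.

Definition connected_on (G : graph) (A : {set gV G}) : Prop :=
  forall x y, x \in A -> y \in A ->
    connect [rel u v | [&& u \in A, v \in A & gadj G u v]] x y.

Definition is_block (G : graph) : Prop :=
  connected_on [set: gV G] /\ forall v : gV G, connected_on ([set: gV G] :\ v).

Definition Kg (n : nat) : graph := @Graph 'I_n (fun x y => x != y).
Definition Ig (n : nat) : graph := @Graph 'I_n (fun _ _ => false).

Definition gunion (G H : graph) : graph :=
  @Graph (gV G + gV H)%type (fun x y =>
    match x, y with
    | inl a, inl b => gadj G a b
    | inr a, inr b => gadj H a b
    | _, _ => false
    end).

Definition gjoin (G H : graph) : graph :=
  @Graph (gV G + gV H)%type (fun x y =>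
    match x, y with
    | inl a, inl b => gadj G a b
    | inr a, inr b => gadj H a b
    | _, _ => true
    end).

Definition copies (t : nat) (G : graph) : graph :=
  @Graph ('I_t * gV G)%type (fun x y => (x.1 == y.1) && gadj G x.2 y.2).

Definition attach (G H : graph) (c : gV G) (S : {set gV H}) : graph :=
  @Graph (gV G + gV H)%type (fun x y =>
    match x, y with
    | inl a, inl b => gadj G a b
    | inr a, inr b => gadj H a b
    | inl a, inr b => (a == c) && (b \in S)
    | inr b, inl a => (a == c) && (b \in S)
    end).

Definition link (G H : graph) (cx : gV G) (cy : gV H) : graph :=
  attach cx [set cy].

(* T(n,s): vertices 0..n-1, i ~ j iff i, j lie in different residue classes
   mod s (balanced complete s-partite; K_n when s >= n). *)
Definition Turan (n s : nat) : graph :=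
  @Graph 'I_n (fun i j => (i %% s) != (j %% s)).

Definition delta (k : nat) : nat := k./2 - 1.

Definition Hn (n m k : nat) : graph :=
  if m <= delta k + 2 then gjoin (Turan (delta k) (m - 2)) (Ig (n - delta k))
  else if ~~ odd k then gjoin (Kg (delta k)) (Ig (n - delta k))
  else gjoin (Kg (delta k)) (gunion (Ig (n - delta k - 2)) (Kg 2)).

Definition star (s : nat) : graph := gjoin (Kg 1) (Ig s).
Definition star_centre (s : nat) : gV (star s) := inl ord0.
Definition star_leaves (s : nat) : {set gV (star s)} :=
  [set x : gV (star s) | if x is inr _ then true else false].

(* double star S_{a,b}: stars on a and on b vertices with centres joined *)
Definition dstar (a b : nat) : graph :=
  link (star_centre (a - 1)) (star_centre (b - 1)).

(* G_1(n,k) = K_1 v tK_{delta_k}, n = 1 + t delta_k; centre = inl ord0 *)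
Definition G1 (t k : nat) : graph := gjoin (Kg 1) (copies t (Kg (delta k))).
Definition G1_centre (t k : nat) : gV (G1 t k) := inl ord0.

Definition G2 (t1 t2 k : nat) : graph := link (G1_centre t1 k) (G1_centre t2 k).

(* G_3: G_1(n-1,k) (with t blocks) where one block K_{delta_k+1} is replaced
   by the graph B (of order delta_k + 2), B's vertex c playing the centre. *)
Definition G3 (t k : nat) (B : graph) (c : gV B) : graph :=
  attach c [set: gV (copies (t - 1) (Kg (delta k)))].

Arguments G3 : clear implicits.
Definition G4 (t n2 : nat) : graph := attach (G1_centre t 7) (star_leaves (n2 - 2)).
Definition G5 (t n2 : nat) : graph :=
  attach (G1_centre t 7) [set: gV (star (n2 - 2))].

From mathcomp Require Import all_boot zify.
Set Implicit Arguments. Unset Strict Implicit. Unset Printing Implicit Defensive.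

(* Clique counts add up over disjoint unions, convolve over joins, and attaching
   a vertex c of G to a set S of vertices of H adds the (r-1)-cliques of H inside
   S.  Every graph of the statement is assembled from complete and edgeless
   graphs in this way, so with d = delta_k all counts are explicit: for instance
   N_r(G_1) = t C(d+1, r) and N_r(H_n) = C(d, r) + (n - d) C(d, r-1), plus
   C(d, r-2) when H_n contains the extra K_2.  The block B of G_3 has at most
   C(d+2, r) r-cliques, and at most those of K_{d+2} minus an edge when m = d+2.
   All comparisons then reduce to C(d+1, r) < d C(d, r-1), true for d >= 2; when
   d = 1 (so r = 2 and k is 4 or 5) the counts are computed exactly and, in the
   equality cases, the two graphs are shown isomorphic by explicit bijections. *)

Section Cliques.
Variable G : graph.
Implicit Types (S : {set gV G}) (x y : gV G).

Lemma cliqueP S :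
  reflect (forall x y, x \in S -> y \in S -> x != y -> gadj G x y) (clique S).
Proof.
apply: (iffP forallP) => [cl x y xS yS nxy | cl x].
  by have := cl x; rewrite xS => /forallP /(_ y); rewrite yS nxy.
apply/implyP => xS; apply/forallP => y; apply/implyP => yS; apply/implyP.
exact: cl.
Qed.

Lemma clique0 : clique (set0 : {set gV G}).
Proof. by apply/cliqueP => x y; rewrite inE. Qed.

Lemma clique1 x : clique [set x].
Proof. by apply/cliqueP => u v; rewrite !inE => /eqP -> /eqP ->; rewrite eqxx. Qed.

Lemma NrE r : Nr r G = \sum_(S : {set gV G}) ((#|S| == r) && clique S).
Proof. by rewrite /Nr -sum1_card big_mkcond; apply: eq_bigr => S _; rewrite inE. Qed.

Lemma Nr0 : Nr 0 G = 1.
Proof.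
rewrite NrE (bigD1 set0) //= cards0 clique0 big1 // => S.
by rewrite -cards_eq0 => /negbTE ->.
Qed.

Lemma Nr_le_bin r : Nr r G <= 'C(#|gV G|, r).
Proof.
rewrite /Nr -card_draws; apply/subset_leq_card/subsetP => S.
by rewrite !inE => /andP [].
Qed.

Lemma Nr_bin r : (forall S, #|S| = r -> clique S) -> Nr r G = 'C(#|gV G|, r).
Proof.
move=> cl; rewrite /Nr -card_draws; apply: eq_card => S; rewrite !inE.
by case: eqP => //= /cl.
Qed.

Lemma Nr1 : Nr 1 G = #|gV G|.
Proof. by rewrite Nr_bin ?bin1 // => S /eqP /cards1P [x ->]; apply: clique1. Qed.

Lemma Nr_le_nonedge r x y : x != y -> ~~ gadj G x y ->
  Nr r G <= 'C(#|gV G|.-1, r) + 'C(#|gV G|.-2, r.-1).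
Proof.
move=> nxy nadj.
(* An r-clique avoids x, or contains x but not y; removing x maps the latter
   injectively to (r-1)-subsets of the complement of {x, y}. *)
pose Sx := [set S : {set gV G} | (S \subset [set~ x]) && (#|S| == r)].
pose Sxy := [set S : {set gV G} | [&& x \in S, y \notin S & #|S| == r]].
pose T := [set S : {set gV G} | (S \subset ~: [set x; y]) && (#|S| == r.-1)].
have cover : Nr r G <= #|Sx| + #|Sxy|.
  apply: leq_trans (leq_card_setU Sx Sxy); apply/subset_leq_card/subsetP => S.
  rewrite !inE => /andP [-> cl]; rewrite !andbT.
  have [xS|xS] := boolP (x \in S).
    apply/orP; right; apply/andP; split=> //; apply: contraNN nadj => yS.
    by move/cliqueP: cl; apply.
  apply/orP; left; apply/subsetP => z zS; rewrite !inE.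
  by apply: contraNneq xS => <-.
have cardSx : #|Sx| = 'C(#|gV G|.-1, r) by rewrite cards_draws cardsC1.
have cardT : #|T| = 'C(#|gV G|.-2, r.-1).
  by rewrite cards_draws -(cardsC [set x; y]) cards2 nxy add2n.
have Sxy_T : #|Sxy| <= #|T|.
  rewrite -(@card_in_imset _ _ (fun S => S :\ x)).
    apply/subset_leq_card/subsetP => _ /imsetP [S /[!inE] /and3P [xS yS /eqP cS] ->].
    rewrite -cS (cardsD1 x S) xS add1n eqxx andbT.
    apply/subsetP => z; rewrite !inE => /andP [zx zS].
    by rewrite negb_or zx; apply: contraNneq yS => <-.
  move=> S S' /[!inE] /and3P [xS _ _] /and3P [xS' _ _] e.
  by rewrite -(setD1K xS) -(setD1K xS') e.
by rewrite -cardSx -cardT; apply: (leq_trans cover); rewrite leq_add2l.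
Qed.

Lemma Nr_le_Kfree r : Nr #|gV G| G = 0 ->
  Nr r G <= 'C(#|gV G|.-1, r) + 'C(#|gV G|.-2, r.-1).
Proof.
move=> NrG; have : ~~ clique [set: gV G].
  by apply/negP => cl; move: NrG; rewrite NrE (bigD1 setT) //= cardsT eqxx cl.
move/forallPn => [x]; rewrite negb_imply => /andP [_ /forallPn [y]].
rewrite !negb_imply => /andP [_ /andP [nxy nadj]].
exact: (Nr_le_nonedge r nxy nadj).
Qed.

End Cliques.

Lemma Nr_K r n : Nr r (Kg n) = 'C(n, r).
Proof. by rewrite Nr_bin ?card_ord // => S _; apply/cliqueP. Qed.

Lemma Nr_I r n : 1 < r -> Nr r (Ig n) = 0.
Proof.
move=> r_gt1; rewrite NrE big1 // => S _; apply/eqP; rewrite eqb0.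
apply/negP => /andP [/eqP cS /cliqueP cl].
have /card_gt1P [x [y [xS yS nxy]]] : 1 < #|S| by rewrite cS.
by have := cl x y xS yS nxy.
Qed.

Lemma Nr_Turan r d s : d <= s -> Nr r (Turan d s) = 'C(d, r).
Proof.
move=> le_ds; rewrite Nr_bin ?card_ord // => S _; apply/cliqueP => i j _ _ /=.
by rewrite !modn_small ?(leq_trans (ltn_ord _) le_ds).
Qed.

Definition iso_map (G H : graph) (f : gV G -> gV H) :=
  bijective f /\ forall x y, gadj H (f x) (f y) = gadj G x y.

Lemma iso_id (G : graph) : iso_map (G := G) (H := G) id.
Proof. by split; first exists id. Qed.

Section Isomorphism.
Variables G H K : graph.

Lemma iso_sym : isomorphic G H -> isomorphic H G.
Proof.
case=> f [[g fK gK] fE]; exists g; split; first by exists f.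
by move=> x y; rewrite -fE !gK.
Qed.

Lemma iso_trans : isomorphic G H -> isomorphic H K -> isomorphic G K.
Proof.
case=> f [fbij fE] [g [gbij gE]]; exists (g \o f); split.
  exact: bij_comp.
by move=> x y /=; rewrite gE fE.
Qed.

Lemma clique_imset (f : gV G -> gV H) (S : {set gV G}) :
  iso_map f -> clique (f @: S) = clique S.
Proof.
case=> /bij_inj f_inj fE; apply/cliqueP/cliqueP => cl x y.
  move=> xS yS nxy; rewrite -fE; apply: cl; rewrite ?imset_f //.
  by rewrite (inj_eq f_inj).
move=> /imsetP [x' x'S ->] /imsetP [y' y'S ->]; rewrite (inj_eq f_inj) fE.
exact: cl.
Qed.

Lemma iso_Nr r : isomorphic G H -> Nr r G = Nr r H.
Proof.
case=> f fiso; have [[g fK gK] _] := fiso; have f_inj := can_inj fK.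
rewrite !NrE (reindex (fun S : {set gV G} => f @: S)) /=.
  by apply: eq_bigr => S _; rewrite card_imset // clique_imset.
exists (fun T : {set gV H} => g @: T) => T _; rewrite -imset_comp.
  by rewrite (eq_imset _ fK) imset_id.
by rewrite (eq_imset _ gK) imset_id.
Qed.

Lemma Nr_lt_niso r : Nr r G < Nr r H -> ~ isomorphic G H.
Proof. by move=> lt_GH /(iso_Nr r) eq_GH; move: lt_GH; rewrite eq_GH ltnn. Qed.

End Isomorphism.

Definition gsum (G H : graph) (X : gV G -> gV H -> bool) : graph :=
  @Graph (gV G + gV H)%type (fun u v =>
    match u, v with
    | inl a, inl b => gadj G a b
    | inr a, inr b => gadj H a b
    | inl a, inr b | inr b, inl a => X a b
    end).
Arguments gsum : clear implicits.

Section GraphSum.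
Variables G H : graph.

Lemma gjoinE : gjoin G H = gsum G H (fun _ _ => true).
Proof. by []. Qed.

Lemma gunionE : gunion G H = gsum G H (fun _ _ => false).
Proof. by []. Qed.

Lemma attachE c S : attach c S = gsum G H (fun a b => (a == c) && (b \in S)).
Proof. by []. Qed.

Definition setsum (SA : {set gV G}) (SB : {set gV H}) : {set gV G + gV H} :=
  [set u | match u with inl a => a \in SA | inr b => b \in SB end].

Definition cross (X : gV G -> gV H -> bool) (SA : {set gV G}) (SB : {set gV H}) :=
  [forall a in SA, forall b in SB, X a b].

Lemma card_setsum SA SB : #|setsum SA SB| = #|SA| + #|SB|.
Proof.
by rewrite -!sum1_card big_sumType; congr (_ + _); apply: eq_bigl => u; rewrite inE.
Qed.

Lemma clique_setsum X SA SB :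
  clique (G := gsum G H X) (setsum SA SB) = [&& clique SA, clique SB & cross X SA SB].
Proof.
apply/cliqueP/and3P => [cl | [/cliqueP clA /cliqueP clB /forallP cr]].
  split.
  - by apply/cliqueP => x y xS yS nxy; apply: (cl (inl x) (inl y)); rewrite ?inE.
  - by apply/cliqueP => x y xS yS nxy; apply: (cl (inr x) (inr y)); rewrite ?inE.
  - apply/forallP => a; apply/implyP => aS; apply/forallP => b; apply/implyP => bS.
    by apply: (cl (inl a) (inr b)); rewrite ?inE.
move=> [a|b] [a'|b']; rewrite !inE /= => uS vS nuv.
- by apply: clA => //; apply: contra nuv => /eqP ->.
- by have /forallP/(_ b') := implyP (cr a) uS; rewrite vS.
- by have /forallP/(_ b) := implyP (cr a') vS; rewrite uS.
- by apply: clB => //; apply: contra nuv => /eqP ->.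
Qed.

Lemma cross0l X SB : cross X set0 SB.
Proof. by apply/forallP => a; rewrite inE. Qed.

Lemma cross0r X SA : cross X SA set0.
Proof. by apply/forallP => a; apply/implyP => _; apply/forallP => b; rewrite inE. Qed.

Lemma Nr_gsum r X :
  Nr r (gsum G H X) = \sum_(SA : {set gV G}) \sum_(SB : {set gV H})
     [&& #|SA| + #|SB| == r, clique SA, clique SB & cross X SA SB].
Proof.
rewrite NrE (reindex (fun p : {set gV G} * {set gV H} => setsum p.1 p.2)) /=.
  by rewrite pair_big; apply: eq_bigr => -[SA SB] _; rewrite card_setsum clique_setsum.
exists (fun S : {set gV (gsum G H X)} => ([set a | inl a \in S], [set b | inr b \in S])).
  by move=> [SA SB] _; congr pair; apply/setP => x; rewrite !inE.
by move=> S _; apply/setP => -[a|b]; rewrite !inE.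
Qed.

Lemma Nr_gsum_split r X : 0 < r ->
  Nr r (gsum G H X) = Nr r G + Nr r H +
   \sum_(SA : {set gV G} | SA != set0) \sum_(SB : {set gV H} | SB != set0)
     [&& #|SA| + #|SB| == r, clique SA, clique SB & cross X SA SB].
Proof.
move=> r_gt0; have Nr_nonempty (F : graph) :
    Nr r F = \sum_(S : {set gV F} | S != set0) ((#|S| == r) && clique S).
  by rewrite NrE (bigD1 set0) //= cards0; case: r r_gt0.
rewrite Nr_gsum (bigD1 set0) //= addnAC addnC; congr (_ + _); last first.
  by rewrite NrE; apply: eq_bigr => SB _; rewrite cards0 (clique0 G) (cross0l X) add0n andbT.
rewrite Nr_nonempty -big_split; apply: eq_bigr => SA _ /=.
by rewrite (bigD1 set0) //= cards0 addn0 clique0 cross0r !andbT.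
Qed.

Lemma Nr_join r : Nr r (gjoin G H) = \sum_(i < r.+1) Nr i G * Nr (r - i) H.
Proof.
transitivity (\sum_(i < r.+1) \sum_(SA : {set gV G}) \sum_(SB : {set gV H})
    ((#|SA| == i) && clique SA) * ((#|SB| == r - i) && clique SB)).
  rewrite gjoinE Nr_gsum [RHS]exchange_big; apply: eq_bigr => SA _; rewrite [RHS]exchange_big.
  apply: eq_bigr => SB _ /=.
  pose F i := clique SA * ((#|SB| == r - i) && clique SB).
  rewrite (eq_bigr (fun i : 'I_r.+1 => if i == #|SA| :> nat then F i else 0)); last first.
    by move=> i _; rewrite eq_sym; case: eqP => [->|]; rewrite ?mul1n.
  rewrite -big_mkcond big_ord1_eq ltnS /F.
  have -> : cross (fun _ _ => true) SA SB.
    by apply/forallP => a; apply/implyP => _; apply/forallP => b; apply/implyP.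
  case: leqP => [le_r|gt_r]; last first.
    by rewrite gtn_eqF // ltn_addr.
  have -> : (#|SB| == r - #|SA|) = (#|SA| + #|SB| == r) by apply/eqP/eqP; lia.
  by case: (clique SA); rewrite /= ?mul1n ?andbT ?andbF.
by apply: eq_bigr => i _; rewrite !NrE big_distrl; apply: eq_bigr => SA _; rewrite big_distrr.
Qed.

Lemma Nr_join_small r : 1 < r -> (forall j, 2 < j -> Nr j H = 0) ->
  Nr r (gjoin G H) = Nr r G + Nr 1 H * Nr r.-1 G + Nr 2 H * Nr r.-2 G.
Proof.
case: r => [|[|s]] // _ NrH; rewrite Nr_join !big_ord_recr big1 => [|i _]; last first.
  by rewrite NrH ?muln0 //=; have := ltn_ord i; lia.
rewrite /= subnn subSS subSnn (_ : s.+2 - s = 2); last by lia.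
rewrite Nr0; lia.
Qed.

Lemma Nr_union r : 0 < r -> Nr r (gunion G H) = Nr r G + Nr r H.
Proof.
move=> r_gt0; rewrite gunionE Nr_gsum_split // big1 ?addn0 // => SA /set0Pn [a aA].
rewrite big1 // => SB /set0Pn [b bB]; apply/eqP; rewrite eqb0.
by apply/negP => /and4P [_ _ _ /forallP/(_ a)/implyP/(_ aA)/forallP/(_ b)/implyP/(_ bB)].
Qed.

End GraphSum.

Definition Nr_in (j : nat) (H : graph) (S : {set gV H}) : nat :=
  \sum_(T : {set gV H}) [&& T \subset S, #|T| == j & clique T].
Arguments Nr_in : clear implicits.

Section CliquesWithin.
Variable H : graph.

Lemma Nr_inT j : Nr_in j H setT = Nr j H.
Proof. by rewrite NrE; apply: eq_bigr => T _; rewrite subsetT. Qed.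

Lemma Nr_in_le j S : Nr_in j H S <= Nr j H.
Proof. by rewrite NrE; apply: leq_sum => T _; case: (T \subset S). Qed.

Lemma Nr_in_set1 j (v : gV H) : 0 < j -> Nr_in j H [set v] = (j == 1).
Proof.
move=> j_gt0; rewrite /Nr_in (bigD1 [set v]) //= subxx cards1 clique1 eq_sym.
rewrite andbT big1 ?addn0 // => T nTv; apply/eqP; rewrite eqb0; apply/and3P => -[Tv /eqP cT _].
by move: nTv; rewrite eqEcard Tv cards1 cT j_gt0.
Qed.

End CliquesWithin.

Lemma Nr_attach r (G H : graph) (c : gV G) (S : {set gV H}) : 1 < r ->
  Nr r (attach c S) = Nr r G + Nr r H + Nr_in r.-1 H S.
Proof.
case: r => [|[|r]] // _; rewrite attachE Nr_gsum_split //; congr (_ + _).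
rewrite (bigD1 [set c]) /=; last by apply/set0Pn; exists c; rewrite inE.
rewrite [X in _ + X]big1 ?addn0; last first.
  move=> SA /andP [SA0 SAc]; apply: big1 => SB /set0Pn [b bB].
  apply/eqP; rewrite eqb0; apply/negP => /and4P [_ _ _ /forallP cr].
  move/negP: SAc; apply; rewrite eqEcard cards1 card_gt0 SA0 andbT.
  apply/subsetP => a aA; rewrite inE.
  by have /forallP/(_ b)/implyP/(_ bB)/andP[] := implyP (cr a) aA.
rewrite /Nr_in [RHS](bigD1 set0) //= cards0 andbF add0n.
apply: eq_bigr => SB _; rewrite cards1 clique1 add1n eqSS.
have -> : cross (fun a b => (a == c) && (b \in S)) [set c] SB = (SB \subset S).
  apply/forallP/subsetP => [cr b bB | sub a].
    by have /forallP/(_ b)/implyP/(_ bB)/andP[] := implyP (cr c) (set11 c).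
  apply/implyP; rewrite inE => /eqP->; apply/forallP => b; apply/implyP => /sub->.
  by rewrite eqxx.
by case: (SB \subset S); rewrite /= ?andbT ?andbF.
Qed.

Definition sum_map (A B A' B' : Type) (f : A -> A') (g : B -> B') (u : A + B) :
    A' + B' :=
  match u with inl a => inl (f a) | inr b => inr (g b) end.

Lemma iso_gsum (G H G' H' : graph) X X' (f : gV G -> gV G') (g : gV H -> gV H') :
  iso_map f -> iso_map g -> (forall a b, X' (f a) (g b) = X a b) ->
  iso_map (G := gsum G H X) (H := gsum G' H' X') (sum_map f g).
Proof.
move=> [[f' fK f'K] fE] [[g' gK g'K] gE] XE; split.
  by exists (sum_map f' g') => -[a|b] /=; rewrite ?fK ?gK ?f'K ?g'K.
by move=> [a|b] [a'|b'] /=.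
Qed.

Lemma iso_K1 (e : rel 'I_1) : irreflexive e -> iso_map (G := Kg 1) (H := Graph e) id.
Proof. by move=> e_irr; split=> [|x y /=]; [exists id | rewrite !ord1 e_irr]. Qed.

Lemma iso_copies_K1 t : iso_map (G := copies t (Kg 1)) (H := Ig t) fst.
Proof.
split=> [|[i a] [j b] /=]; last by rewrite !ord1 eqxx andbF.
by exists (fun i => (i, ord0)) => [[i a]|i] //=; rewrite ord1.
Qed.

Lemma iso_copiesS t (G : graph) : isomorphic (copies t.+1 G) (gunion (copies t G) G).
Proof.
pose f (u : gV (copies t.+1 G)) : gV (gunion (copies t G) G) :=
  if unlift ord_max u.1 is Some i then inl (i, u.2) else inr u.2.
pose g (v : gV (gunion (copies t G) G)) : gV (copies t.+1 G) :=
  match v with inl w => (lift ord_max w.1, w.2) | inr x => (ord_max, x) end.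
exists f; split.
  exists g => [[i x]|[[j x]|x]]; rewrite /f /g /= ?liftK ?unlift_none //.
  by case: unliftP => [j ->|->].
move=> [i x] [i' x']; rewrite /f /=.
case: unliftP => [j ->|->]; case: unliftP => [j' ->|->] //=.
- by rewrite (inj_eq lift_inj).
- by rewrite eq_sym (negbTE (neq_lift _ _)).
- by rewrite (negbTE (neq_lift _ _)).
- by rewrite eqxx.
Qed.

Lemma Nr_copies r t (G : graph) : 0 < r -> Nr r (copies t G) = t * Nr r G.
Proof.
move=> r_gt0; elim: t => [|t IHt].
  apply/eqP; rewrite -leqn0 (leq_trans (Nr_le_bin _ _)) //.
  by rewrite card_prod card_ord mul0n bin0n; case: r r_gt0.
by rewrite (iso_Nr _ (iso_copiesS t G)) Nr_union // IHt mulSn addnC.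
Qed.

Definition sum_swap (A B : Type) (u : A + B) : B + A :=
  match u with inl a => inr a | inr b => inl b end.

Lemma Nr_gjoinC r (G H : graph) : Nr r (gjoin G H) = Nr r (gjoin H G).
Proof.
apply: iso_Nr; exists (@sum_swap _ _); split; last by move=> [a|b] [a'|b'].
by exists (@sum_swap _ _) => -[].
Qed.

Lemma Nr_cone r (G : graph) : 1 < r -> Nr r (gjoin (Kg 1) G) = Nr r G + Nr r.-1 G.
Proof.
move=> r_gt1; rewrite Nr_gjoinC Nr_join_small // => [|j j_gt2]; last first.
  by rewrite Nr_K bin_small // (leq_trans _ j_gt2).
by rewrite !Nr_K bin1 bin_small // mul1n mul0n addn0.
Qed.

Lemma Nr_joinI r (G : graph) n : 1 < r ->
  Nr r (gjoin G (Ig n)) = Nr r G + n * Nr r.-1 G.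
Proof.
move=> r_gt1; rewrite Nr_join_small // => [|j j_gt2]; last by rewrite Nr_I // (ltnW j_gt2).
by rewrite Nr1 card_ord Nr_I // mul0n addn0.
Qed.

Lemma Nr_copiesK r t n : 0 < r -> Nr r (copies t (Kg n)) = t * 'C(n, r).
Proof. by move=> r_gt0; rewrite Nr_copies // Nr_K. Qed.

Lemma bin_succ n r : 0 < r -> 'C(n.+1, r) = 'C(n, r) + 'C(n, r.-1).
Proof. by case: r. Qed.

Lemma bin_gap d r : 1 < d -> 1 < r <= d.+1 -> 'C(d.+1, r) < d * 'C(d, r.-1).
Proof.
(* r C(d+1, r) = (d+1) C(d, r-1) with r >= 2 and d + 1 < 2 d. *)
move=> d_gt1; case: r => [|[|s]] // /andP [_ le_sd].
have Y_gt0 : 0 < 'C(d, s.+1) by rewrite bin_gt0.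
have pascal := mul_bin_diag d.+1 s.+1; rewrite /= in pascal *.
have : 2 * 'C(d.+1, s.+2) <= s.+2 * 'C(d.+1, s.+2) by rewrite leq_mul2r ltnS ltn0Sn orbT.
have : 2 * 'C(d, s.+1) <= d * 'C(d, s.+1) by rewrite leq_mul2r d_gt1 orbT.
lia.
Qed.

Section SpecialGraphs.
Variables (r k : nat).
Hypothesis r_gt1 : 1 < r.
Let d := delta k.
Let r_gt0 : 0 < r. Proof. exact: ltnW. Qed.
Let r1_gt0 : 0 < r.-1. Proof. by case: r r_gt1 => [|[|]]. Qed.

Lemma Nr_G1 t : Nr r (G1 t k) = t * 'C(d.+1, r).
Proof. by rewrite Nr_cone // !Nr_copiesK // -mulnDr bin_succ. Qed.

Lemma Nr_G2 t1 t2 : Nr r (G2 t1 t2 k) = (t1 + t2) * 'C(d.+1, r) + (r == 2).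
Proof.
rewrite /G2 /link Nr_attach // !Nr_G1 -mulnDl Nr_in_set1 //.
by case: r r_gt1 => [|[|[|]]].
Qed.

Lemma Nr_G3 t (B : graph) (c : gV B) :
  Nr r (G3 t k B c) = Nr r B + (t - 1) * 'C(d.+1, r).
Proof.
by rewrite /G3 Nr_attach // Nr_inT !Nr_copiesK // -addnA -mulnDr -bin_succ.
Qed.

Lemma Nr_Hn n m : d + 2 <= m -> d + 2 <= n ->
  Nr r (Hn n m k) = 'C(d, r) + (n - d) * 'C(d, r.-1)
     + (if (d + 2 < m) && odd k then 'C(d, r.-2) else 0).
Proof.
move=> le_dm le_dn; rewrite /Hn -/d; case: leqP => [le_md|lt_dm] /=.
  by rewrite Nr_joinI // !Nr_Turan ?addn0 //; lia.
case: (odd k); last by rewrite Nr_joinI // !Nr_K addn0.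
rewrite Nr_join_small // => [|j j_gt2]; last first.
  by rewrite Nr_union ?(ltnW (ltnW j_gt2)) // Nr_I ?Nr_K ?bin_small // (ltnW j_gt2).
rewrite Nr1 Nr_union // Nr_I // !Nr_K binn card_sum !card_ord add0n mul1n.
by rewrite subnK //; lia.
Qed.

End SpecialGraphs.

Lemma block3_complete (B : graph) : simple B -> #|gV B| = 3 -> is_block B ->
  forall u v, gadj B u v = (u != v).
Proof.
move=> [_ irrB] cardB [_ blk] u v; have [->|nuv] := eqVneq u v; first exact: irrB.
apply/negPn/negP => nadj.
have /cards1P [z uvC] : #|~: [set u; v]| == 1.
  by have := cardsC [set u; v]; rewrite cards2 nuv cardB => /eqP; rewrite -(eqn_add2l 2).
have zC : z \in ~: [set u; v] by rewrite uvC set11.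
have notz x : x \in [set u; v] -> x \in [set: gV B] :\ z.
  by move=> xuv; rewrite !inE andbT; apply: contraTneq zC => <-; rewrite inE xuv.
have /connectP [[|w p] /= path_uv last_v] :=
  blk z u v (notz _ (set21 u v)) (notz _ (set22 u v)).
  by move: nuv; rewrite last_v eqxx.
case/andP: path_uv => /and3P [_ wz uw] _; move: wz; rewrite !inE andbT.
suff : w \in [set z] by rewrite inE => ->.
rewrite -uvC !inE negb_or; apply/andP; split.
  by apply: contraTneq uw => <-; rewrite irrB.
by apply: contraTneq uw => ->.
Qed.

Lemma iso_cone_star t (e : rel 'I_1) : irreflexive e ->
  isomorphic (gjoin (Kg 1) (copies t (Kg 1))) (gjoin (Graph e) (Ig t)).
Proof.
move=> e_irr; exists (sum_map id fst).
exact: iso_gsum (iso_K1 e_irr) (iso_copies_K1 t) _.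
Qed.

Lemma iso_G2_dstar t1 t2 : isomorphic (G2 t1 t2 5) (dstar t1.+1 t2.+1).
Proof.
have G1_star t : iso_map (G := G1 t 5) (H := star t) (sum_map id fst).
  by apply: iso_gsum (iso_K1 _) (iso_copies_K1 t) _ => // i; rewrite eqxx.
rewrite /dstar !subn1 /=; exists (sum_map (sum_map id fst) (sum_map id fst)).
apply: iso_gsum (G1_star t1) (G1_star t2) _ => a b; rewrite !inE.
by case: a b => [a|[i a]] [b|[j b]] //=; rewrite !ord1.
Qed.

Lemma iso_attach_complete p (B H : graph) (c : gV B) :
  #|gV B| = p.+1 -> (forall u v, gadj B u v = (u != v)) ->
  isomorphic (attach c [set: gV H]) (gjoin (Kg 1) (gunion H (Kg p))).
Proof.
move=> cardB adjB; have cardBc : #|[set~ c]| = p by rewrite cardsC1 cardB.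
pose pick (j : 'I_p) := enum_val (cast_ord (esym cardBc) j).
have pick_inj : injective pick by move=> j j' /enum_val_inj /cast_ord_inj.
have pick_c j : (pick j == c) = false.
  by apply/negbTE; have := enum_valP (cast_ord (esym cardBc) j); rewrite !inE.
pose g (u : gV (gjoin (Kg 1) (gunion H (Kg p)))) : gV (attach c [set: gV H]) :=
  match u with inl _ => inl c | inr (inl h) => inr h | inr (inr j) => inl (pick j) end.
have g_inj : injective g.
  move=> [a|[h|j]] [a'|[h'|j']] //=.
  - by rewrite !ord1.
  - by case=> /eqP; rewrite eq_sym pick_c.
  - by case=> ->.
  - by case=> /eqP; rewrite pick_c.
  - by case=> /pick_inj ->.
apply: iso_sym; exists g; split.
  by apply: inj_card_bij g_inj _; rewrite !card_sum !card_ord cardB addnCA addnC.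
move=> [a|[h|j]] [a'|[h'|j']] //=; rewrite ?adjB ?eqxx ?pick_c ?inE //.
- by rewrite !ord1.
- by rewrite eq_sym pick_c.
- by rewrite (inj_eq pick_inj).
Qed.

Lemma leq_eq_iff (a b : nat) (P : Prop) :
  (a < b /\ ~ P) \/ (a = b /\ P) -> a <= b /\ (a = b <-> P).
Proof.
case=> [[lt_ab nP] | [-> HP]]; last by [].
by split; [exact: ltnW | split=> // eq_ab; move: lt_ab; rewrite eq_ab ltnn].
Qed.

Section ExtremalGraphs.
Variables k m r : nat.
Hypotheses (lt_mk : m < k) (r_bounds : 2 <= r <= delta k + 1) (le_dm : delta k <= m - 2).

Let bounds :
  [/\ 1 < r, 0 < r.-1, r <= (delta k).+1, 0 < delta k & delta k + 2 <= m].
Proof. by case/andP: r_bounds; split; lia. Qed.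

Let gap s : 1 < delta k -> 0 < s ->
  s * 'C((delta k).+1, r) < s * (delta k * 'C(delta k, r.-1)).
Proof.
have [r_gt1 _ le_rd _ _] := bounds.
by move=> d_gt1 s_gt0; rewrite ltn_pmul2l // bin_gap // r_gt1.
Qed.

Let r2_of_d1 : delta k = 1 -> r = 2.
Proof. by case/andP: r_bounds => + + d1; rewrite d1; lia. Qed.

Lemma Nr_G1_Hn t : 2 <= t ->
  let n := 1 + t * delta k in
  Nr r (G1 t k) <= Nr r (Hn n m k) /\
  (Nr r (G1 t k) = Nr r (Hn n m k) <-> r = 2 /\ isomorphic (G1 t k) (Hn n m k)).
Proof.
move=> t_ge2 n; have [r_gt1 r1_gt0 le_rd d_gt0 le_dm2] := bounds; apply: leq_eq_iff.
have le_dn : delta k + 2 <= n by rewrite /n; nia.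
have := Nr_Hn r_gt1 le_dm2 le_dn.
have -> : n - delta k = 1 + (t - 1) * delta k by rewrite /n; nia.
set E := (if _ then _ else _) => eH.
have [d_gt1|d_le1] := ltnP 1 (delta k).
  have lt_GH : Nr r (G1 t k) < Nr r (Hn n m k).
    have := gap d_gt1 (_ : 0 < t - 1).
    rewrite Nr_G1 // eH !bin_succ ?(ltnW r_gt1) //; lia.
  by left; split=> // -[_ /(Nr_lt_niso lt_GH)].
have d1 : delta k = 1 by lia.
have r2 := r2_of_d1 d1; subst r.
have eG : Nr 2 (G1 t k) = t by rewrite Nr_G1 // d1 binn muln1.
rewrite {}/E d1 bin_small // bin1 bin0 /= in eH.
case: ifPn eH => [E1|E0] eH.
  have lt_GH : Nr 2 (G1 t k) < Nr 2 (Hn n m k) by rewrite eG eH; lia.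
  by left; split=> // -[_ /(Nr_lt_niso lt_GH)].
right; split; first by rewrite eG eH; lia.
split=> //; rewrite /G1 /Hn d1 (_ : n - 1 = t); last by rewrite /n d1; lia.
case: ifP => [_|lt_3m]; first by apply: iso_cone_star => i /=; rewrite eqxx.
rewrite (_ : odd k = false) /=; last by move: E0 lt_3m; case: (odd k); lia.
by apply: iso_cone_star => i /=; rewrite eqxx.
Qed.

Lemma Nr_G2_Hn : odd k -> forall t1 t2 : nat, 1 <= t1 -> 1 <= t2 ->
  let n := (1 + t1 * delta k) + (1 + t2 * delta k) in
  Nr r (G2 t1 t2 k) <= Nr r (Hn n m k) /\
  (Nr r (G2 t1 t2 k) = Nr r (Hn n m k) <->
     [/\ k = 5, m = 3 &
         exists a : nat, 1 <= a < n /\ isomorphic (G2 t1 t2 k) (dstar a (n - a))]).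
Proof.
move=> odd_k t1 t2 t1_gt0 t2_gt0 n; have [r_gt1 r1_gt0 le_rd d_gt0 le_dm2] := bounds.
apply: leq_eq_iff.
have le_dn : delta k + 2 <= n by rewrite /n; nia.
have := Nr_Hn r_gt1 le_dm2 le_dn.
have -> : n - delta k = 2 + (t1 + t2 - 1) * delta k by rewrite /n; nia.
set E := (if _ then _ else _) => eH.
have [d_gt1|d_le1] := ltnP 1 (delta k).
  have lt_GH : Nr r (G2 t1 t2 k) < Nr r (Hn n m k).
    have Y_gt0 : 0 < 'C(delta k, r.-1) by rewrite bin_gt0 -ltnS prednK // ltnW.
    have : (r == 2) <= 1 by case: (r == 2).
    have := gap d_gt1 (_ : 0 < t1 + t2 - 1).
    rewrite Nr_G2 // eH !bin_succ ?(ltnW r_gt1) //; lia.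
  by left; split=> // -[k5]; move: d_gt1; rewrite k5.
have d1 : delta k = 1 by lia.
have r2 := r2_of_d1 d1; subst r.
have k5 : k = 5 by move: d1 odd_k; rewrite /delta; lia.
have eG : Nr 2 (G2 t1 t2 k) = t1 + t2 + 1 by rewrite Nr_G2 // d1 binn muln1.
rewrite {}/E d1 odd_k andbT bin_small // bin1 bin0 in eH.
case: ifPn eH => [lt_3m|le_m3] eH.
  have lt_GH : Nr 2 (G2 t1 t2 k) < Nr 2 (Hn n m k) by rewrite eG eH; lia.
  by left; split=> // -[_ m3]; move: lt_3m; rewrite m3.
right; split; first by rewrite eG eH; lia.
split=> //; first by lia.
exists t1.+1; split; first by rewrite /n d1; lia.
by rewrite (_ : n - t1.+1 = t2.+1) ?k5; [apply: iso_G2_dstar | rewrite /n d1; lia].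
Qed.

Lemma Nr_block_le (B : graph) : #|gV B| = delta k + 2 -> Nr m B = 0 ->
  Nr r B <= 'C(delta k, r) + 2 * 'C(delta k, r.-1)
            + (if delta k + 2 < m then 'C(delta k, r.-2) else 0).
Proof.
move=> cardB NmB; have [r_gt1 r1_gt0 _ _ le_dm2] := bounds.
case: (ltnP (delta k + 2) m) => [_|le_md].
  apply: leq_trans (Nr_le_bin _ _) _.
  by rewrite cardB addn2 !bin_succ ?(ltnW r_gt1) //; lia.
have m_eq : m = #|gV B| by rewrite cardB; lia.
apply: leq_trans (Nr_le_Kfree r _) _; first by rewrite -m_eq.
by rewrite cardB addn2 /= bin_succ ?(ltnW r_gt1) //; lia.
Qed.

Lemma Nr_G3_Hn : odd k -> forall (t : nat) (B : graph) (c : gV B), 2 <= t ->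
  simple B -> #|gV B| = delta k + 2 -> Nr m B = 0 -> is_block B ->
  min_degree_ge (G3 t k B c) (delta k) ->
  let n := 1 + (1 + t * delta k) in
  Nr r (G3 t k B c) <= Nr r (Hn n m k) /\
  (Nr r (G3 t k B c) = Nr r (Hn n m k) <->
     r = 2 /\ isomorphic (G3 t k B c) (Hn n m k)).
Proof.
move=> odd_k t B c t_ge2 simB cardB NmB blockB _ n.
have [r_gt1 r1_gt0 le_rd d_gt0 le_dm2] := bounds; apply: leq_eq_iff.
have le_dn : delta k + 2 <= n by rewrite /n; nia.
have := Nr_Hn r_gt1 le_dm2 le_dn.
have -> : n - delta k = 2 + (t - 1) * delta k by rewrite /n; nia.
rewrite odd_k andbT; set E := (if _ then _ else _) => eH.
have NrB := Nr_block_le cardB NmB; rewrite -/E in NrB.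
have [d_gt1|d_le1] := ltnP 1 (delta k).
  have lt_GH : Nr r (G3 t k B c) < Nr r (Hn n m k).
    have := gap d_gt1 (_ : 0 < t - 1).
    rewrite Nr_G3 // eH bin_succ ?(ltnW r_gt1) //; lia.
  by left; split=> // -[_ /(Nr_lt_niso lt_GH)].
have d1 : delta k = 1 by lia.
have r2 := r2_of_d1 d1; subst r.
have k5 : k = 5 by move: d1 odd_k; rewrite /delta; lia.
rewrite d1 add1n in cardB; have adjB := block3_complete simB cardB blockB.
have NrB_all j : Nr j B = 'C(3, j).
  by rewrite -cardB Nr_bin // => S _; apply/cliqueP => u v _ _; rewrite adjB.
have m4 : m = 4.
  have : m != 3 by apply: contra_eqN NmB => /eqP ->; rewrite NrB_all binn.
  by move: lt_mk le_dm2; rewrite d1 k5; lia.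
subst m.
have eG : Nr 2 (G3 t k B c) = t + 2.
  by rewrite Nr_G3 // NrB_all d1 binn muln1 (_ : 'C(3, 2) = 3) //; lia.
rewrite /E d1 bin_small // bin1 bin0 /= in eH.
right; split; first by rewrite eG eH; lia.
split=> //; rewrite /G3 /Hn d1 k5 /= (_ : n - 1 - 2 = t - 1); last by rewrite /n d1; lia.
apply: iso_trans (iso_attach_complete (copies (t - 1) (Kg 1)) c cardB adjB) _.
exists (sum_map id (sum_map fst id)).
by apply: iso_gsum (iso_id _) (iso_gsum (iso_copies_K1 _) (iso_id _) _) _.
Qed.

End ExtremalGraphs.

Lemma Nr_G4_G5_lt : forall r t n2 : nat, 2 <= r <= delta 7 + 1 -> 1 <= t -> 4 <= n2 ->
  let n := (1 + t * delta 7) + n2 - 1 in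
  Nr r (G4 t n2) < Nr r (gjoin (Kg 2) (Ig (n - 2))) /\
  Nr r (G5 t n2) < Nr r (gjoin (Kg 2) (Ig (n - 2))).
Proof.
move=> r t n2 /andP [r_gt1 r_le3] t_gt0 n2_ge4 n.
suff attach_lt (S : {set gV (star (n2 - 2))}) :
    Nr r (attach (G1_centre t 7) S) < Nr r (gjoin (Kg 2) (Ig (n - 2))).
  by split; apply: attach_lt.
rewrite Nr_attach // Nr_joinI // !Nr_K Nr_G1 //.
apply: leq_ltn_trans (leq_add (leqnn _) (Nr_in_le _ _)) _.
rewrite /n /star (_ : delta 7 = 2) //.
have [->|->] : r = 2 \/ r = 3 by move: r_le3; rewrite /delta /=; lia.
  by rewrite Nr1 Nr_cone // Nr_I // Nr1 card_sum !card_ord /binomial /=; lia.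
by rewrite !Nr_cone // /= Nr1 !Nr_I // card_ord /binomial /=; lia.
Qed.

Lemma Nr_k9_lt : forall r n : nat, 2 <= r <= delta 9 + 1 -> 4 < n -> ~~ odd n ->
  Nr r (gjoin (Ig 2) (copies ((n - 2)./2) (Kg 2))) < Nr r (gjoin (Kg 3) (Ig (n - 3))) /\
  Nr r (gjoin (Kg 2) (copies ((n - 2)./2) (Kg 2))) < Nr r (gjoin (Kg 3) (Ig (n - 3))).
Proof.
move=> r n /andP [r_gt1 r_le4] n_gt4 even_n; set q := (n - 2)./2.
have n_eq : n = q.*2 + 2 by rewrite /q; lia.
have small_K2 j : 2 < j -> Nr j (Kg 2) = 0 by move=> j_gt2; rewrite Nr_K bin_small.
rewrite !(Nr_gjoinC r _ (copies q (Kg 2))) !Nr_joinI // Nr_join_small // Nr1 card_ord.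
have : r = 2 \/ r = 3 \/ r = 4 by move: r_le4; rewrite /delta /=; lia.
case=> [|[|]] ->; rewrite /= ?Nr0 !Nr_copiesK // !Nr_K /binomial /=; lia.
Qed.

Theorem lemma4p2 :
  (* Part (1) *)
  (forall k m r : nat, m < k -> 2 <= r <= delta k + 1 -> delta k <= m - 2 ->
    (* i = 1 : G_1(n,k), n = 1 + t delta_k *)
    (forall t : nat, 2 <= t ->
      let n := 1 + t * delta k in
      Nr r (G1 t k) <= Nr r (Hn n m k) /\
      (Nr r (G1 t k) = Nr r (Hn n m k) <-> r = 2 /\ isomorphic (G1 t k) (Hn n m k)))
    /\
    (* i = 2 : G_2(n,k), k odd, n = n1 + n2 *)
    (odd k -> forall t1 t2 : nat, 1 <= t1 -> 1 <= t2 ->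
      let n := (1 + t1 * delta k) + (1 + t2 * delta k) in
      Nr r (G2 t1 t2 k) <= Nr r (Hn n m k) /\
      (Nr r (G2 t1 t2 k) = Nr r (Hn n m k) <->
         [/\ k = 5, m = 3 &
             exists a : nat, 1 <= a < n /\ isomorphic (G2 t1 t2 k) (dstar a (n - a))]))
    /\
    (* i = 3 : G_3(n,k), k odd, n = 1 + (1 + t delta_k) *)
    (odd k -> forall (t : nat) (B : graph) (c : gV B), 2 <= t ->
      simple B -> #|gV B| = delta k + 2 -> Nr m B = 0 -> is_block B ->
      min_degree_ge (G3 t k B c) (delta k) ->
      let n := 1 + (1 + t * delta k) in
      Nr r (G3 t k B c) <= Nr r (Hn n m k) /\
      (Nr r (G3 t k B c) = Nr r (Hn n m k) <->
         r = 2 /\ isomorphic (G3 t k B c) (Hn n m k))))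
  /\
  (* Part (2): k = 7 *)
  (forall r t n2 : nat, 2 <= r <= delta 7 + 1 -> 1 <= t -> 4 <= n2 ->
    let n := (1 + t * delta 7) + n2 - 1 in
    Nr r (G4 t n2) < Nr r (gjoin (Kg 2) (Ig (n - 2))) /\
    Nr r (G5 t n2) < Nr r (gjoin (Kg 2) (Ig (n - 2))))
  /\
  (* Part (3): k = 9 *)
  (forall r n : nat, 2 <= r <= delta 9 + 1 -> 4 < n -> ~~ odd n ->
    Nr r (gjoin (Ig 2) (copies ((n - 2)./2) (Kg 2))) < Nr r (gjoin (Kg 3) (Ig (n - 3))) /\
    Nr r (gjoin (Kg 2) (copies ((n - 2)./2) (Kg 2))) < Nr r (gjoin (Kg 3) (Ig (n - 3)))).
Proof.
split; last by split; [exact: Nr_G4_G5_lt | exact: Nr_k9_lt].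
move=> k m r lt_mk r_bounds le_dm.
by split; [exact: Nr_G1_Hn | split; [exact: Nr_G2_Hn | exact: Nr_G3_Hn]].
Qed.
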